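(* Let $A$ be a semilocal ring, $Z$ a finite $A$-scheme, $Y \subset Z$ a closed subscheme, and $d > 0$. Suppose given a closed immersion $\iota_Y\colon Y \hookrightarrow \mathbb{A}^d_A$ over $A$ and, for every maximal ideal $\mathfrak{m} \subset A$, a closed immersion $\iota_\mathfrak{m}\colon Z_{k_\mathfrak{m}} \hookrightarrow \mathbb{A}^d_{k_\mathfrak{m}}$ over $k_\mathfrak{m}$, such that these are compatible (i.e. $\iota_\mathfrak{m}$ and $\iota_Y$ agree on $Y_{k_\mathfrak{m}}$). Then there is a closed immersion $\iota\colon Z \hookrightarrow \mathbb{A}^d_A$ over $A$ that restricts to $\iota_Y$ on $Y$ and to $\iota_\mathfrak{m}$ on $Z_{k_\mathfrak{m}}$ for every maximal ideal $\mathfrak{m}$.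
   Context: $k_\mathfrak{m}$ denotes the residue field of $A$ at $\mathfrak{m}$. *)

From HB Require Import structures.
From mathcomp Require Import all_boot all_algebra.
Set Implicit Arguments. Unset Strict Implicit. Unset Printing Implicit Defensive.
Import GRing.Theory.
Local Open Scope ring_scope.

Definition is_ideal (R : comPzRingType) (I : R -> Prop) : Prop :=
  [/\ I 0, (forall x y, I x -> I y -> I (x + y)) & (forall r x, I x -> I (r * x))].

Definition is_maximal_ideal (R : comPzRingType) (m : R -> Prop) : Prop :=
  [/\ is_ideal m, ~ m 1 &
      forall J : R -> Prop, is_ideal J -> (forall x, m x -> J x) ->
        (forall x, J x <-> m x) \/ (forall x, J x)].

Definition semilocal (R : comPzRingType) : Prop :=
  exists (n : nat) (ms : 'I_n -> (R -> Prop)), forall m, is_maximal_ideal m ->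
    exists i, forall x, m x <-> ms i x.

Section Alg.
Variables (A B : comPzRingType) (f : {rmorphism A -> B}).

Definition finite_algebra : Prop :=
  exists (n : nat) (v : 'I_n -> B), forall b : B,
    exists c : 'I_n -> A, b = \sum_(i < n) f (c i) * v i.

Inductive gen_alg (d : nat) (x : 'I_d -> B) : B -> Prop :=
  | gen_scal a : gen_alg x (f a)
  | gen_var i : gen_alg x (x i)
  | gen_add u v : gen_alg x u -> gen_alg x v -> gen_alg x (u + v)
  | gen_mul u v : gen_alg x u -> gen_alg x v -> gen_alg x (u * v).

Inductive ext_ideal (m : A -> Prop) : B -> Prop :=
  | ext0 : ext_ideal m 0
  | ext_gen a b : m a -> ext_ideal m (f a * b)
  | ext_add u v : ext_ideal m u -> ext_ideal m v -> ext_ideal m (u + v).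

Definition ideal_sum (I J : B -> Prop) (v : B) : Prop :=
  exists i j, [/\ I i, J j & v = i + j].

(* x_1..x_d generate B modulo the ideal I: i.e. X_i |-> x_i mod I defines  *)
(* a surjection A[X_1..X_d] ->> B/I, a closed immersion Spec(B/I) -> A^d_A. *)
Definition generates_mod (I : B -> Prop) (d : nat) (x : 'I_d -> B) : Prop :=
  forall b, exists u, gen_alg x u /\ I (b - u).

End Alg.

From HB Require Import structures.
From mathcomp Require Import all_boot all_algebra.
From mathcomp Require Import boolp classical_sets.
From mathcomp Require Import ring.
Set Implicit Arguments. Unset Strict Implicit. Unset Printing Implicit Defensive.
Import GRing.Theory.
Local Open Scope ring_scope.

(* The closed immersion is x := y + j, where the correction j in J is chosen
   by the Chinese remainder theorem over the finitely many maximal ideals of A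
   so that x = z_m modulo mB for every m.  Then A[x] + mB = B for every maximal
   m, and Nakayama's lemma for the finite A-module B gives A[x] = B. *)

Section Ideals.
Variables (R : comPzRingType) (I : R -> Prop).
Hypothesis hI : is_ideal I.

Lemma ideal0 : I 0.
Proof. by case: hI. Qed.

Lemma idealD x y : I x -> I y -> I (x + y).
Proof. by case: hI => _ + _; apply. Qed.

Lemma idealMl {r} x : I x -> I (r * x).
Proof. by case: hI => _ _; apply. Qed.

Lemma idealMr {r} x : I x -> I (x * r).
Proof. by rewrite mulrC; apply: idealMl. Qed.

Lemma idealN x : I x -> I (- x).
Proof. by rewrite -mulN1r; apply: idealMl. Qed.

Lemma idealB x y : I x -> I y -> I (x - y).
Proof. by move=> Ix /idealN; apply: idealD. Qed.

Lemma ideal1_all : I 1 -> forall x, I x.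
Proof. by move=> I1 x; rewrite -(mulr1 x); apply: idealMl. Qed.

End Ideals.

Section MaximalIdeals.
Variable R : comPzRingType.

Lemma maximal_is_ideal (m : R -> Prop) : is_maximal_ideal m -> is_ideal m.
Proof. by case. Qed.

Lemma ideal_sum_is_ideal (I J : R -> Prop) :
  is_ideal I -> is_ideal J -> is_ideal (ideal_sum I J).
Proof.
move=> hI hJ; split.
- by exists 0, 0; rewrite addr0; split => //; apply: ideal0.
- move=> _ _ [i [j [Ii Jj ->]]] [i' [j' [Ii' Jj' ->]]].
  by exists (i + i'), (j + j'); split; [apply: idealD|apply: idealD|ring].
- move=> r _ [i [j [Ii Jj ->]]].
  by exists (r * i), (r * j); split; [apply: idealMl|apply: idealMl|ring].
Qed.

Lemma exists_maximal_over (I : R -> Prop) :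
  is_ideal I -> ~ I 1 -> exists m, is_maximal_ideal m /\ forall a, I a -> m a.
Proof.
move=> hI nI1.
pose P K := [/\ is_ideal K, ~ K 1 & forall a, I a -> K a].
pose le (K L : {K | P K}) := `[< forall x, sval K x -> sval L x >].
have LI (L : {K | P K}) : is_ideal (sval L) by case: (svalP L).
have IL (L : {K | P K}) a : I a -> sval L a by case: (svalP L) => _ _; apply.
pose I0 := exist P I (And3 hI nI1 (fun _ => id)).
have [K Kmax] : exists K, premaximal le K.
  apply: (@ZL_preorder _ I0).
  - by move=> K; apply/asboolP.
  - by move=> ? ? ? /asboolP h1 /asboolP h2; apply/asboolP => x /h1 /h2.
  move=> F Ftot.
  (* Adding I makes U an ideal even when the chain F is empty. *)
  pose U x := I x \/ exists2 K, F K & sval K x.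
  have FU L : F L -> forall w, sval L w -> U w by move=> FL w Lw; right; exists L.
  have common x y : U x -> U y ->
      exists L : {K | P K}, [/\ sval L x, sval L y & forall w, sval L w -> U w].
    case=> [Ix|[K1 FK1 K1x]] [Iy|[K2 FK2 K2y]].
    - by exists I0; split => // w Iw; left.
    - by exists K2; split; [apply: IL|by []|apply: FU].
    - by exists K1; split; [by []|apply: IL|apply: FU].
    - case: (Ftot _ _ FK1 FK2) => /asboolP le12; [exists K2|exists K1].
        by split; [apply: le12|by []|apply: FU].
      by split; [by []|apply: le12|apply: FU].
  have PU : P U.
    split; last by move=> a Ia; left.
    - split; first by left; apply: ideal0.
      + move=> x y Ux Uy; have [L [Lx Ly LU]] := common x y Ux Uy.
        by apply: LU; apply: idealD.
      + move=> r x [Ix|[L FL Lx]]; first by left; apply: idealMl.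
        by right; exists L => //; apply: idealMl.
    - by case=> [//|[L _]]; case: (svalP L).
  by exists (exist P U PU) => L FL; apply/asboolP => x Lx; right; exists L.
exists (sval K); split; last exact: IL.
split; [exact: LI|by case: (svalP K)|].
move=> L hL KL; have [L1|nL1] := pselect (L 1); first by right; apply: ideal1_all.
have PL : P L by split => // a /(IL K); apply: KL.
have /asboolP LK := Kmax (exist P L PL) (asboolT KL).
by left => x; split; [apply: LK|apply: KL].
Qed.

Lemma maximal_comaximal (p m : R -> Prop) :
  is_maximal_ideal p -> is_maximal_ideal m -> p <> m -> exists2 q, p q & m (1 - q).
Proof.
move=> [hp np1 pmax] [hm nm1 mmax] pm.
have mK x : m x -> ideal_sum p m x.
  by move=> mx; exists 0, x; split; rewrite ?add0r //; apply: ideal0.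
case: (mmax _ (ideal_sum_is_ideal hp hm) mK) => [Km|Kall].
  have pm' x : p x -> m x.
    by move=> px; apply/Km; exists x, 0; split; rewrite ?addr0 //; apply: ideal0.
  case: (pmax m hm pm') => [mp|mall]; last by case: nm1; apply: mall.
  by case: pm; apply/funext => x; apply/propext; split => /mp.
have [q [r [pq mr e]]] := Kall 1.
by exists q; rewrite // e addrC addKr.
Qed.

Lemma semilocal_maximal_seq : semilocal R ->
  exists2 ms : seq (R -> Prop),
    forall m, m \in ms -> is_maximal_ideal m & forall m, is_maximal_ideal m -> m \in ms.
Proof.
case=> n [ms hms]; exists [seq m <- map ms (enum 'I_n) | `[< is_maximal_ideal m >]].
  by move=> m; rewrite mem_filter => /andP [/asboolP].
move=> m hm; have [i hi] := hms m hm.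
have e : m = ms i by apply/funext => x; apply/propext.
by rewrite mem_filter asboolT // e map_f ?mem_enum.
Qed.

Lemma maximal_avoid (m : R -> Prop) (ms : seq (R -> Prop)) :
  is_maximal_ideal m -> (forall p, p \in ms -> is_maximal_ideal p) -> m \notin ms ->
  exists2 e, m (1 - e) & forall p, p \in ms -> p e.
Proof.
move=> hm; elim: ms => [|p ms IH] hms.
  by exists 1; rewrite // subrr; apply: ideal0; apply: maximal_is_ideal.
rewrite inE negb_or => /andP [/eqP mp m_ms].
have hp : is_maximal_ideal p by apply: hms; rewrite mem_head.
have hms' q : q \in ms -> is_maximal_ideal q.
  by move=> qms; apply: hms; rewrite inE qms orbT.
have [e me he] := IH hms' m_ms.
have [q pq mq] := maximal_comaximal hp hm (nesym mp).
exists (e * q).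
  have -> : 1 - e * q = (1 - e) + e * (1 - q) by ring.
  exact: (idealD (maximal_is_ideal hm) me (idealMl (maximal_is_ideal hm) mq)).
move=> p'; rewrite inE => /orP [/eqP -> | p'ms].
  exact: (idealMl (maximal_is_ideal hp) pq).
exact: (idealMr (maximal_is_ideal (hms' _ p'ms)) (he _ p'ms)).
Qed.

End MaximalIdeals.

Section ExtendedIdeals.
Variables (A B : comPzRingType) (f : {rmorphism A -> B}).

Lemma ext_ideal_is_ideal (m : A -> Prop) : is_ideal (ext_ideal f m).
Proof.
split; [exact: ext0|exact: ext_add|move=> r u].
elim=> [|a b ma|u1 u2 _ h1 _ h2].
- by rewrite mulr0; apply: ext0.
- by rewrite mulrCA; apply: ext_gen.
- by rewrite mulrDr; apply: ext_add.
Qed.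

Variable J : B -> Prop.
Hypothesis hJ : is_ideal J.

Lemma crt_seq (ms : seq (A -> Prop)) (s : (A -> Prop) -> B) :
  (forall m, m \in ms -> is_maximal_ideal m) ->
  (forall m, m \in ms -> ideal_sum J (ext_ideal f m) (s m)) ->
  exists2 j, J j & forall m, m \in ms -> ext_ideal f m (j - s m).
Proof.
elim: ms => [|m ms IH] hms hs; first by exists 0 => //; apply: ideal0.
have hms' p : p \in ms -> is_maximal_ideal p.
  by move=> pms; apply: hms; rewrite inE pms orbT.
have hs' p : p \in ms -> ideal_sum J (ext_ideal f p) (s p).
  by move=> pms; apply: hs; rewrite inE pms orbT.
have [j Jj hj] := IH hms' hs'.
have [m_ms|m_ms] := boolP (m \in ms).
  by exists j => // p; rewrite inE => /orP [/eqP ->|]; apply: hj.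
have [e me he] := maximal_avoid (hms m (mem_head _ _)) hms' m_ms.
have [t [w [Jt mw sm]]] := hs m (mem_head _ _).
(* e is 1 modulo m and 0 modulo the ideals of ms, so the new j agrees with t
   at m and with the old j at the ideals of ms. *)
exists (j + f e * (t - j)); first exact: (idealD hJ Jj (idealMl hJ (idealB hJ Jt Jj))).
move=> p; rewrite inE => /orP [/eqP -> | pms].
  have -> : j + f e * (t - j) - s m = f (1 - e) * (j - t) - w.
    by rewrite sm rmorphB rmorph1; ring.
  exact: (idealB (ext_ideal_is_ideal m) (ext_gen _ _ me) mw).
have -> : j + f e * (t - j) - s p = (j - s p) + f e * (t - j) by ring.
exact: (idealD (ext_ideal_is_ideal p) (hj p pms) (ext_gen _ _ (he p pms))).
Qed.

Lemma semilocal_crt (s : (A -> Prop) -> B) : semilocal A ->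
  (forall m, is_maximal_ideal m -> ideal_sum J (ext_ideal f m) (s m)) ->
  exists2 j, J j & forall m, is_maximal_ideal m -> ext_ideal f m (j - s m).
Proof.
move=> /semilocal_maximal_seq [ms hms ms_all] hs.
have [j Jj hj] := crt_seq hms (fun m mms => hs m (hms m mms)).
by exists j => // m /ms_all /hj.
Qed.

End ExtendedIdeals.

Section Nakayama.
Variables (A B : comPzRingType) (f : {rmorphism A -> B}).

Definition is_submodule (C : B -> Prop) : Prop :=
  [/\ C 0, forall u v, C u -> C v -> C (u + v) & forall a u, C u -> C (f a * u)].

Definition full_mod_maximal (C : B -> Prop) : Prop :=
  forall m, is_maximal_ideal m -> forall b, exists u, C u /\ ext_ideal f m (b - u).

Definition adjoin (C : B -> Prop) (v : B) (b : B) : Prop := exists a, C (b - f a * v).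

Variable C : B -> Prop.
Hypothesis hC : is_submodule C.

Lemma sub_adjoin v u : C u -> adjoin C v u.
Proof. by exists 0; rewrite rmorph0 mul0r subr0. Qed.

Lemma adjoin_submodule v : is_submodule (adjoin C v).
Proof.
case: hC => C0 CD CZ; split; first exact: sub_adjoin.
- move=> u w [a1 h1] [a2 h2]; exists (a1 + a2).
  by have := CD _ _ h1 h2; congr C; rewrite rmorphD; ring.
- move=> a u [a1 h1]; exists (a * a1).
  by have := CZ a _ h1; congr C; rewrite rmorphM; ring.
Qed.

Lemma full_adjoin v : full_mod_maximal C -> full_mod_maximal (adjoin C v).
Proof.
move=> hfull m hm b; have [u [Cu mbu]] := hfull m hm b.
by exists u; split => //; apply: sub_adjoin.
Qed.

Lemma coef_ideal v : is_ideal (fun a => C (f a * v)).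
Proof.
case: hC => C0 CD CZ; split => /=.
- by rewrite rmorph0 mul0r.
- by move=> a1 a2 h1 h2; rewrite rmorphD mulrDl; apply: CD.
- by move=> r a h; rewrite rmorphM -mulrA; apply: CZ.
Qed.

Lemma ext_ideal_mod_adjoin v (m : A -> Prop) : is_ideal m ->
  (forall b, adjoin C v b) ->
  forall w, ext_ideal f m w -> exists2 a, m a & C (w - f a * v).
Proof.
case: hC => C0 CD CZ hm hall w; elim=> [|a b ma|u1 u2 _ [a1 ma1 h1] _ [a2 ma2 h2]].
- by exists 0; rewrite ?rmorph0 ?mul0r ?subr0 //; apply: ideal0.
- have [a' hb] := hall b; exists (a * a'); first exact: (idealMr hm ma).
  by have := CZ a _ hb; congr C; rewrite rmorphM; ring.
- exists (a1 + a2); first exact: (idealD hm ma1 ma2).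
  by have := CD _ _ h1 h2; congr C; rewrite rmorphD; ring.
Qed.

Lemma nakayama_adjoin v :
  full_mod_maximal C -> (forall b, adjoin C v b) -> forall b, C b.
Proof.
move=> hfull hall.
suff Cv : C v.
  case: hC => _ CD CZ b; have [a hb] := hall b.
  by rewrite -(subrK (f a * v) b); apply: CD hb (CZ _ _ Cv).
(* Otherwise {a | f a * v \in C} lies in a maximal ideal m, and writing
   v = u + w with u \in C and w \in mB puts 1 - a in it for some a \in m. *)
apply: contrapT; rewrite -[v]mul1r -(rmorph1 f) => nC1.
have [m [hm coef_m]] := exists_maximal_over (coef_ideal v) nC1.
have [u [Cu mvu]] := hfull m hm v.
have [a ma Cva] := ext_ideal_mod_adjoin (maximal_is_ideal hm) hall mvu.
have m1a : m (1 - a).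
  apply: coef_m; have -> : f (1 - a) * v = u + (v - u - f a * v).
    by rewrite rmorphB rmorph1; ring.
  by case: hC => _ CD _; apply: CD.
case: hm => hmI nm1 _; apply: nm1.
by rewrite -(subrK a 1); apply: idealD.
Qed.

End Nakayama.

Lemma nakayama_seq (A B : comPzRingType) (f : {rmorphism A -> B})
    (I : Type) (r : seq I) (v : I -> B) (C : B -> Prop) :
  is_submodule f C -> full_mod_maximal f C ->
  (forall b, exists2 u, C u & exists c : I -> A, b = u + \sum_(i <- r) f (c i) * v i) ->
  forall b, C b.
Proof.
elim: r C => [|i r IH] C hC hfull hspan.
  by move=> b; have [u Cu [c ->]] := hspan b; rewrite big_nil addr0.
apply: (nakayama_adjoin hC hfull (v := v i)).
apply: IH; [exact: adjoin_submodule|exact: full_adjoin|move=> b].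
have [u Cu [c ->]] := hspan b.
exists (u + f (c i) * v i); first by exists (c i); rewrite addrK.
by exists c; rewrite big_cons addrA.
Qed.

Lemma nakayama (A B : comPzRingType) (f : {rmorphism A -> B}) (C : B -> Prop) :
  finite_algebra f -> is_submodule f C -> full_mod_maximal f C -> forall b, C b.
Proof.
case=> n [v hv] hC hfull.
apply: (nakayama_seq (r := index_enum 'I_n) (v := v) hC hfull) => b.
have [c ->] := hv b; exists 0; first by case: hC.
by exists c; rewrite add0r.
Qed.

Section GeneratedAlgebra.
Variables (A B : comPzRingType) (f : {rmorphism A -> B}) (d : nat).

Lemma gen_alg_submodule (x : 'I_d -> B) : is_submodule f (gen_alg f x).
Proof.
split; [rewrite -(rmorph0 f); exact: gen_scal|exact: gen_add|].
by move=> a u; apply: gen_mul; apply: gen_scal.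
Qed.

Lemma gen_alg_congr (I : B -> Prop) (x z : 'I_d -> B) : is_ideal I ->
  (forall i, I (x i - z i)) ->
  forall u, gen_alg f z u -> exists u', gen_alg f x u' /\ I (u - u').
Proof.
move=> hI hxz u; elim=> [a|i|u1 u2 _ [v1 [g1 e1]] _ [v2 [g2 e2]]
                         |u1 u2 _ [v1 [g1 e1]] _ [v2 [g2 e2]]].
- by exists (f a); split; [exact: gen_scal|rewrite subrr; apply: ideal0].
- exists (x i); split; first exact: gen_var.
  by rewrite -opprB; apply: idealN.
- exists (v1 + v2); split; first exact: gen_add.
  have -> : u1 + u2 - (v1 + v2) = (u1 - v1) + (u2 - v2) by ring.
  exact: idealD.
- exists (v1 * v2); split; first exact: gen_mul.
  have -> : u1 * u2 - v1 * v2 = u2 * (u1 - v1) + v1 * (u2 - v2) by ring.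
  exact: (idealD hI (idealMl hI e1) (idealMl hI e2)).
Qed.

Lemma generates_mod_congr (I : B -> Prop) (x z : 'I_d -> B) : is_ideal I ->
  generates_mod f I z -> (forall i, I (x i - z i)) -> generates_mod f I x.
Proof.
move=> hI hz hxz b; have [u [gu Ibu]] := hz b.
have [u' [gu' Iuu']] := gen_alg_congr hI hxz gu.
exists u'; split => //; rewrite -(subrKA u); exact: idealD.
Qed.

End GeneratedAlgebra.

Theorem proposition3p1
  (A B : comPzRingType) (f : {rmorphism A -> B})
  (hA : semilocal A) (hB : finite_algebra f)
  (J : B -> Prop) (hJ : is_ideal J)
  (d : nat) (hd : (0 < d)%N)
  (y : 'I_d -> B) (hy : generates_mod f J y)
  (z : (A -> Prop) -> 'I_d -> B)
  (hz : forall m, is_maximal_ideal m -> generates_mod f (ext_ideal f m) (z m))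
  (hcompat : forall m, is_maximal_ideal m -> forall i,
       ideal_sum J (ext_ideal f m) (z m i - y i)) :
  exists x : 'I_d -> B,
    [/\ (forall b, gen_alg f x b),
        (forall i, J (x i - y i)) &
        (forall m, is_maximal_ideal m -> forall i, ext_ideal f m (x i - z m i))].
Proof.
have /fin_all_exists [j hj] : forall i, exists ji, J ji /\
    forall m, is_maximal_ideal m -> ext_ideal f m (ji - (z m i - y i)).
  move=> i; have [ji Jji hji] := semilocal_crt hJ hA (fun m hm => hcompat m hm i).
  by exists ji.
have hxz m : is_maximal_ideal m -> forall i, ext_ideal f m (y i + j i - z m i).
  move=> hm i; have -> : y i + j i - z m i = j i - (z m i - y i) by ring.
  exact: (hj i).2 m hm.
exists (fun i => y i + j i); split => [|i|//].
- apply: (nakayama hB (gen_alg_submodule f _)) => m hm.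
  exact: generates_mod_congr (ext_ideal_is_ideal f m) (hz m hm) (hxz m hm).
- by rewrite /= addrC addKr; apply: (hj i).1.
Qed.
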